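(* Let $\theta$ be an irrational number whose best rational approximants $(p_n/q_n)_{n\ge0}$ satisfy $q_n^{-1}\log q_{n+1}\to\infty$ as $n\to\infty$. For any subsequence $q'$ of $(q_n)_{n\ge0}$ and any $z\in\mathbb{C}$ with $|z|>1$, there exists a dense $G_\delta$-subset $E(z)$ of $l^\infty$ such that for every $u\in E(z)$, \[\sup_{N\in\mathbb{N}}|\varphi'_{N\theta,q',u}(z)|=+\infty,\] where $\varphi'_{N\theta,q',u}$ denotes the complex derivative of the entire function $\varphi_{N\theta,q',u}$.
   Context: Best rational approximants $p_n/q_n$ of an irrational $\theta$ are its continued fraction convergents, with $\gcd(p_n,q_n)=1$, $q_n\ge0$. A subsequence $q'$ of $(q_n)$ means $q'_n=q_{k_n}$ with $k_n$ strictly increasing. $l^\infty$ is the complex Banach space of bounded complex sequences $u=(u_m)_{m\ge0}$ with the sup norm. For $\mu\in\mathbb{R}$, $\varphi_{\mu,q',u}(z)=z e^{2\pi i\mu}\sum_{n=0}^\infty u_{q'_n}(1-e^{2\pi i q'_n\mu})z^{q'_n}$, where $u_{q'_n}$ is the $q'_n$-th term of $u$; under the growth hypothesis on $(q_n)$, $\varphi_{N\theta,q',u}$ is entire for every integer $N\ge0$. *)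

From Stdlib Require Import Reals Lra Lia ZArith ClassicalEpsilon.
Open Scope R_scope.

Definition Cx := (R * R)%type.
Definition RtoC (x : R) : Cx := (x, 0).
Definition C0 : Cx := (0, 0).
Definition C1 : Cx := (1, 0).
Definition Cadd (z w : Cx) : Cx := (fst z + fst w, snd z + snd w).
Definition Copp (z : Cx) : Cx := (- fst z, - snd z).
Definition Csub (z w : Cx) : Cx := Cadd z (Copp w).
Definition Cmul (z w : Cx) : Cx :=
  (fst z * fst w - snd z * snd w, fst z * snd w + snd z * fst w).
Definition Cmod (z : Cx) : R := sqrt (fst z ^ 2 + snd z ^ 2).
Fixpoint Cpow (z : Cx) (n : nat) : Cx :=
  match n with O => C1 | S m => Cmul z (Cpow z m) end.
Definition Cexpi (t : R) : Cx := (cos t, sin t).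

Fixpoint Cpartial (a : nat -> Cx) (n : nat) : Cx :=
  match n with O => C0 | S m => Cadd (Cpartial a m) (a m) end.
Definition Cseries_conv (a : nat -> Cx) (l : Cx) : Prop :=
  forall eps, 0 < eps -> exists N, forall n, (N <= n)%nat ->
    Cmod (Csub (Cpartial a n) l) < eps.
Definition Csum (a : nat -> Cx) : Cx :=
  epsilon (inhabits C0) (fun l => Cseries_conv a l).

Definition has_cderiv (f : Cx -> Cx) (z d : Cx) : Prop :=
  forall eps, 0 < eps -> exists delta, 0 < delta /\
    forall w, Cmod (Csub w z) < delta ->
      Cmod (Csub (Csub (f w) (f z)) (Cmul d (Csub w z))) <= eps * Cmod (Csub w z).

Definition irrational (x : R) : Prop :=
  ~ exists (p q : Z), q <> 0%Z /\ x = IZR p / IZR q.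
(* Int_part r = up r - 1 = floor r *)
Fixpoint cf_rest (theta : R) (n : nat) : R :=
  match n with
  | O => theta
  | S m => / (cf_rest theta m - IZR (Int_part (cf_rest theta m)))
  end.
Definition cf_a (theta : R) (n : nat) : Z := Int_part (cf_rest theta n).
(* (q_{n-1}, q_n), with q_{-1} = 0, q_0 = 1, q_{n+1} = a_{n+1} q_n + q_{n-1} *)
Fixpoint cf_qpair (theta : R) (n : nat) : Z * Z :=
  match n with
  | O => (0%Z, 1%Z)
  | S m => let (qa, qb) := cf_qpair theta m in
           (qb, (cf_a theta (S m) * qb + qa)%Z)
  end.
Definition cf_q (theta : R) (n : nat) : Z := snd (cf_qpair theta n).

Definition phi (mu : R) (q' : nat -> Z) (u : nat -> Cx) (z : Cx) : Cx :=
  Cmul (Cmul z (Cexpi (2 * PI * mu)))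
    (Csum (fun n => Cmul (Cmul (u (Z.to_nat (q' n)))
                              (Csub C1 (Cexpi (2 * PI * IZR (q' n) * mu))))
                        (Cpow z (Z.to_nat (q' n))))).

Definition bounded_seq (u : nat -> Cx) : Prop :=
  exists M, forall m, Cmod (u m) <= M.
Definition linf_open (O : (nat -> Cx) -> Prop) : Prop :=
  (forall u, O u -> bounded_seq u) /\
  forall u, O u -> exists r, 0 < r /\
    forall v, bounded_seq v -> (forall m, Cmod (Csub (v m) (u m)) <= r) -> O v.
Definition linf_dense (E : (nat -> Cx) -> Prop) : Prop :=
  forall u, bounded_seq u -> forall eps, 0 < eps ->
    exists v, E v /\ forall m, Cmod (Csub (v m) (u m)) <= eps.
Definition linf_Gdelta (E : (nat -> Cx) -> Prop) : Prop :=
  exists O : nat -> ((nat -> Cx) -> Prop),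
    (forall j, linf_open (O j)) /\
    forall u, E u <-> (forall j, O j u).

From Stdlib Require Import Reals Lra Lia Psatz ZArith.
From Stdlib Require Import Classical ClassicalEpsilon FunctionalExtensionality.
From Coquelicot Require Import Coquelicot.
Open Scope R_scope.

(* For bounded [u], [phi_{N theta, q', u}] is a lacunary power series whose [n]-th
   coefficient carries the factor [1 - e^{2 pi i q'_n N theta}], of modulus at most
   [2 pi N / q_{k_n + 1}] by the continued fraction estimate.  The growth hypothesis
   makes this beat every exponential in [q'_n], so the series may be differentiated
   termwise at [z], and [D_N u := phi'_{N theta, q', u}(z)] is a bounded linear
   functional on [l^infty].  The set of [u] with [sup_N |D_N u| = +oo] is then a
   countable intersection of the open sets [{u | exists N, |D_N u| > j}], and it is
   dense as soon as it is nonempty: if [u] has bounded orbit, [u + eps w] has not.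
   A sequence [w] with unbounded orbit is built by a gliding hump: [w] is the
   indicator of a sparse set [{q'_{n_j}}], with [N_j] chosen so that
   [|1 - e^{2 pi i q'_{n_j} N_j theta}| >= 1]; the term [n_j] of [D_{N_j} w] then
   dominates the earlier terms, while the later ones are negligible because
   [q_{k_n + 1}] is huge compared to every frequency used before. *)

Lemma Cpartial_sum_n (a : nat -> C) n : Cpartial a (S n) = sum_n a n.
Proof.
  induction n as [|n IH].
  - rewrite sum_O. apply injective_projections; simpl; ring.
  - change (Cpartial a (S (S n))) with (Cadd (Cpartial a (S n)) (a (S n))).
    now rewrite IH, sum_Sn.
Qed.

Lemma Cmod_sub_Cmod_le (x y : C) : Cmod x - Cmod y <= Cmod (x + y).
Proof.
  pose proof (Cmod_triangle (x + y) (- y)). rewrite Cmod_opp in H.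
  replace (x + y + - y)%C with x in H by ring. lra.
Qed.

Lemma Cseries_conv_unique (a : nat -> C) l1 l2 :
  Cseries_conv a l1 -> Cseries_conv a l2 -> l1 = l2.
Proof.
  intros H1 H2. destruct (Req_dec (Cmod (l1 - l2)) 0) as [E|E].
  { apply Cmod_eq_0 in E. replace l1 with ((l1 - l2) + l2)%C by ring.
    rewrite E. apply Cplus_0_l. }
  pose proof (Cmod_ge_0 (l1 - l2)).
  destruct (H1 (Cmod (l1 - l2) / 2)) as [N1 HN1]; [lra|].
  destruct (H2 (Cmod (l1 - l2) / 2)) as [N2 HN2]; [lra|].
  specialize (HN1 (max N1 N2) ltac:(lia)). specialize (HN2 (max N1 N2) ltac:(lia)).
  set (s := Cpartial a (max N1 N2)) in *.
  change (Cmod (s - l1) < Cmod (l1 - l2) / 2) in HN1.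
  change (Cmod (s - l2) < Cmod (l1 - l2) / 2) in HN2.
  pose proof (Cmod_sub_Cmod_le (l1 - l2) (s - l1)).
  replace (l1 - l2 + (s - l1))%C with (s - l2)%C in H0 by ring. lra.
Qed.

Lemma Csum_eq_conv (a : nat -> C) l : Cseries_conv a l -> Csum a = l.
Proof.
  intros H. apply (Cseries_conv_unique a); [|exact H].
  unfold Csum. apply epsilon_spec. now exists l.
Qed.

Lemma is_series_Cseries_conv (a : nat -> C) l : is_series a l -> Cseries_conv a l.
Proof.
  intros Hl eps Heps.
  destruct (Hl _ (locally_ball_norm l (mkposreal _ Heps))) as [N HN].
  exists (S N). intros [|n] Hn; [lia|].
  rewrite Cpartial_sum_n. exact (HN n ltac:(lia)).
Qed.

Lemma Csum_eq (a : nat -> C) l : is_series a l -> Csum a = l.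
Proof. intros H. now apply Csum_eq_conv, is_series_Cseries_conv. Qed.

Lemma Cseries_conv_Cmod_le (a : nat -> C) l S :
  Cseries_conv a l -> (forall n, Cmod (Cpartial a n) <= S) -> Cmod l <= S.
Proof.
  intros Hc Hb. apply Rnot_lt_le. intros Hlt.
  destruct (Hc (Cmod l - S)) as [N HN]; [lra|].
  specialize (HN N (le_n N)). specialize (Hb N).
  change (Cmod (Cpartial a N - l) < Cmod l - S) in HN.
  pose proof (Cmod_sub_Cmod_le l (Cpartial a N - l)).
  replace (l + (Cpartial a N - l))%C with (Cpartial a N + 0)%C in H by ring.
  rewrite Cplus_0_r in H. lra.
Qed.

Lemma Cmod_Cpartial_le_geom (a : nat -> C) K :
  (forall n, Cmod (a n) <= K * (1/2) ^ n) -> forall n, Cmod (Cpartial a n) <= 2 * K.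
Proof.
  intros Ha n.
  assert (Hinv : Cmod (Cpartial a n) <= 2 * K - 2 * K * (1/2) ^ n).
  { induction n as [|n IH].
    - change (Cmod (RtoC 0) <= 2 * K - 2 * K * 1). rewrite Cmod_0. lra.
    - change (Cmod (Cpartial a n + a n) <= 2 * K - 2 * K * ((1/2) * (1/2) ^ n)).
      pose proof (Cmod_triangle (Cpartial a n) (a n)). specialize (Ha n). lra. }
  assert (0 <= K * (1/2) ^ n) by (pose proof (Cmod_ge_0 (a n)); specialize (Ha n); lra).
  lra.
Qed.

Lemma Csum_dominated_geom (a : nat -> C) K :
  (forall n, Cmod (a n) <= K * (1/2) ^ n) ->
  is_series a (Csum a) /\ Cmod (Csum a) <= 2 * K.
Proof.
  intros Ha.
  assert (Hex : ex_series a).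
  { apply (ex_series_le (V := C_CompleteNormedModule) a (fun n => K * (1/2) ^ n)); [exact Ha|].
    apply (ex_series_scal_l (V := R_NormedModule) K (fun n => (1/2) ^ n)).
    apply ex_series_geom. rewrite Rabs_pos_eq; lra. }
  destruct Hex as [l Hl]. change C in l. rewrite (Csum_eq a l Hl). split; [exact Hl|].
  apply (Cseries_conv_Cmod_le a); [now apply is_series_Cseries_conv|].
  now apply Cmod_Cpartial_le_geom.
Qed.

Lemma Cpartial_split (a : nat -> C) n0 n :
  Cpartial a n = (Cpartial (fun i => if Nat.eq_dec i n0 then RtoC 0 else a i) n
                  + if lt_dec n0 n then a n0 else RtoC 0)%C.
Proof.
  induction n as [|n IH].
  - destruct (lt_dec n0 0); [lia|]. apply injective_projections; simpl; ring.
  - change (Cpartial a n + a n = Cpartial (fun i => if Nat.eq_dec i n0 then RtoC 0 else a i) n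
        + (if Nat.eq_dec n n0 then RtoC 0 else a n) + (if lt_dec n0 (S n) then a n0 else RtoC 0))%C.
    rewrite IH.
    destruct (lt_dec n0 n); destruct (lt_dec n0 (S n)); destruct (Nat.eq_dec n n0);
      try lia; try ring. subst. ring.
Qed.

Lemma Cmod_Csum_ge_term (a : nat -> C) n0 K :
  (forall n, n <> n0 -> Cmod (a n) <= K * (1/2) ^ n) ->
  Cmod (a n0) - 2 * K <= Cmod (Csum a).
Proof.
  intros Ha.
  set (b := fun i => if Nat.eq_dec i n0 then RtoC 0 else a i).
  assert (Hb : forall n, Cmod (b n) <= K * (1/2) ^ n).
  { intros n. unfold b. destruct (Nat.eq_dec n n0) as [->|Hne]; [|now apply Ha].
    rewrite Cmod_0. pose proof (Cmod_ge_0 (a (S n0))). specialize (Ha (S n0) ltac:(lia)).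
    assert (0 <= (1/2) ^ n0) by (apply pow_le; lra). simpl in Ha. nra. }
  destruct (Csum_dominated_geom b K Hb) as [Hsb Hbound].
  assert (Hsa : Cseries_conv a (a n0 + Csum b)%C).
  { intros eps Heps. destruct (is_series_Cseries_conv b _ Hsb eps Heps) as [N HN].
    exists (max N (S n0)). intros n Hn.
    change (Cmod (Cpartial a n - (a n0 + Csum b)) < eps).
    rewrite (Cpartial_split a n0 n). destruct (lt_dec n0 n); [|lia].
    change (Cmod (Cpartial b n + a n0 - (a n0 + Csum b)) < eps).
    replace (Cpartial b n + a n0 - (a n0 + Csum b))%C with (Cpartial b n - Csum b)%C by ring.
    apply HN. lia. }
  rewrite (Csum_eq_conv a _ Hsa). pose proof (Cmod_sub_Cmod_le (a n0) (Csum b)). lra.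
Qed.

Section ContinuedFraction.
Variable theta : R.
Hypothesis Hirr : irrational theta.

(* [(p_{n-1}, p_n)], with [p_{-1} = 1], [p_0 = a_0], as [cf_qpair] for the denominators. *)
Fixpoint cf_ppair (n : nat) : Z * Z :=
  match n with
  | O => (1%Z, cf_a theta 0)
  | S m => let (pa, pb) := cf_ppair m in (pb, (cf_a theta (S m) * pb + pa)%Z)
  end.

Definition cf_p n := snd (cf_ppair n).
Definition cf_pprev n := fst (cf_ppair n).
Definition cf_qprev n := fst (cf_qpair theta n).
Definition cf_frac n := cf_rest theta n - IZR (cf_a theta n).
Definition cf_err n := IZR (cf_q theta n) * theta - IZR (cf_p n).
Definition cf_err_prev n := IZR (cf_qprev n) * theta - IZR (cf_pprev n).

Lemma cf_qprev_S n : cf_qprev (S n) = cf_q theta n.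
Proof. unfold cf_qprev, cf_q. simpl. now destruct (cf_qpair theta n). Qed.

Lemma cf_q_S n : cf_q theta (S n) = (cf_a theta (S n) * cf_q theta n + cf_qprev n)%Z.
Proof. unfold cf_qprev, cf_q. simpl. now destruct (cf_qpair theta n). Qed.

Lemma cf_err_prev_S n : cf_err_prev (S n) = cf_err n.
Proof.
  unfold cf_err_prev, cf_err, cf_pprev, cf_p. rewrite cf_qprev_S. simpl.
  now destruct (cf_ppair n).
Qed.

Lemma cf_err_S n : cf_err (S n) = IZR (cf_a theta (S n)) * cf_err n + cf_err_prev n.
Proof.
  unfold cf_err, cf_err_prev, cf_p, cf_pprev. rewrite cf_q_S. simpl.
  destruct (cf_ppair n). simpl. rewrite !plus_IZR, !mult_IZR. ring.
Qed.

Lemma cf_rest_irrational n : irrational (cf_rest theta n).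
Proof.
  induction n as [|n IH]; [exact Hirr|].
  intros [p [q [Hq E]]]. apply IH. simpl in E. fold (cf_a theta n) in E.
  set (x := cf_rest theta n) in *. set (a := cf_a theta n) in *.
  assert (Hq' : IZR q <> 0) by now apply not_0_IZR.
  destruct (Z.eq_dec p 0) as [->|Hp].
  - exists a, 1%Z. split; [lia|].
    destruct (Req_dec (x - IZR a) 0) as [H|H]; [lra|].
    exfalso. apply (Rinv_neq_0_compat _ H). rewrite E. unfold Rdiv. ring.
  - exists (a * p + q)%Z, p. split; [exact Hp|].
    assert (Hp' : IZR p <> 0) by now apply not_0_IZR.
    assert (Hf : x - IZR a = IZR q / IZR p).
    { rewrite <- (Rinv_inv (x - IZR a)), E. field. split; auto. }
    rewrite plus_IZR, mult_IZR. replace x with (IZR a + IZR q / IZR p) by lra.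
    field. exact Hp'.
Qed.

Lemma cf_frac_bounds n : 0 < cf_frac n < 1.
Proof.
  unfold cf_frac, cf_a. destruct (base_Int_part (cf_rest theta n)) as [H1 H2].
  split; [|lra].
  destruct (Req_dec (cf_rest theta n - IZR (Int_part (cf_rest theta n))) 0) as [E|E]; [|lra].
  exfalso. apply (cf_rest_irrational n).
  exists (Int_part (cf_rest theta n)), 1%Z. split; [lia|]. lra.
Qed.

Lemma cf_rest_S n : cf_rest theta (S n) = / cf_frac n.
Proof. reflexivity. Qed.

Lemma cf_rest_S_gt_1 n : 1 < cf_rest theta (S n).
Proof.
  rewrite cf_rest_S. destruct (cf_frac_bounds n).
  rewrite <- Rinv_1. apply Rinv_lt_contravar; lra.
Qed.

Lemma cf_a_S_ge_1 n : (1 <= cf_a theta (S n))%Z.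
Proof.
  pose proof (cf_rest_S_gt_1 n). unfold cf_a.
  destruct (base_Int_part (cf_rest theta (S n))) as [_ H2].
  assert (Hpos : (0 < Int_part (cf_rest theta (S n)))%Z) by (apply lt_IZR; lra).
  lia.
Qed.

Lemma cf_q_pos n : (0 <= cf_qprev n)%Z /\ (1 <= cf_q theta n)%Z.
Proof.
  induction n as [|n [IH0 IH1]]; [split; cbv; discriminate|].
  rewrite cf_qprev_S, cf_q_S. pose proof (cf_a_S_ge_1 n). split; nia.
Qed.

Lemma cf_q_ge_1 n : (1 <= cf_q theta n)%Z.
Proof. apply cf_q_pos. Qed.

Lemma cf_q_le_S n : (cf_q theta n <= cf_q theta (S n))%Z.
Proof.
  rewrite cf_q_S. pose proof (cf_a_S_ge_1 n). pose proof (cf_q_pos n). nia.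
Qed.

Lemma cf_q_lt_S n : (1 <= n)%nat -> (cf_q theta n < cf_q theta (S n))%Z.
Proof.
  intros Hn. destruct n as [|n]; [lia|].
  rewrite (cf_q_S (S n)), cf_qprev_S. pose proof (cf_a_S_ge_1 (S n)).
  pose proof (cf_q_ge_1 n). pose proof (cf_q_ge_1 (S n)). nia.
Qed.

Lemma cf_q_le m n : (m <= n)%nat -> (cf_q theta m <= cf_q theta n)%Z.
Proof.
  induction 1 as [|n _ IH]; [lia|]. pose proof (cf_q_le_S n). lia.
Qed.

Lemma cf_q_lt m n : (m < n)%nat -> (2 <= n)%nat -> (cf_q theta m < cf_q theta n)%Z.
Proof.
  intros Hmn Hn. destruct n as [|n]; [lia|].
  pose proof (cf_q_le m n ltac:(lia)). pose proof (cf_q_lt_S n ltac:(lia)). lia.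
Qed.

Lemma cf_q_ge_index n : (Z.of_nat n <= cf_q theta n)%Z.
Proof.
  destruct n as [|n]; [pose proof (cf_q_ge_1 0); lia|].
  induction n as [|n IH]; [pose proof (cf_q_ge_1 1); lia|].
  pose proof (cf_q_lt_S (S n) ltac:(lia)). lia.
Qed.

Lemma cf_err_rest n : cf_err n * cf_rest theta (S n) + cf_err_prev n = 0.
Proof.
  induction n as [|n IH].
  - rewrite cf_rest_S. pose proof (cf_frac_bounds 0).
    unfold cf_err, cf_err_prev, cf_p, cf_pprev, cf_qprev, cf_q, cf_frac in *. simpl in *.
    field. lra.
  - rewrite cf_err_S, cf_err_prev_S.
    replace (cf_err_prev n) with (- (cf_err n * cf_rest theta (S n))) by lra.
    replace (cf_rest theta (S n)) with (IZR (cf_a theta (S n)) + cf_frac (S n))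
      by (unfold cf_frac; ring).
    rewrite cf_rest_S. pose proof (cf_frac_bounds (S n)). field. lra.
Qed.

Lemma cf_err_identity n :
  IZR (cf_q theta n) * Rabs (cf_err_prev n) + IZR (cf_qprev n) * Rabs (cf_err n) = 1.
Proof.
  induction n as [|n IH].
  - unfold cf_err_prev, cf_qprev, cf_pprev, cf_q. simpl.
    rewrite Rabs_left by lra. lra.
  - pose proof (cf_rest_S_gt_1 n) as Hr1. pose proof (cf_rest_S_gt_1 (S n)) as Hr2.
    assert (Eprev : Rabs (cf_err_prev n) = Rabs (cf_err n) * cf_rest theta (S n)).
    { replace (cf_err_prev n) with (- (cf_err n * cf_rest theta (S n)))
        by (pose proof (cf_err_rest n); lra).
      rewrite Rabs_Ropp, Rabs_mult, (Rabs_pos_eq (cf_rest _ _)) by lra. reflexivity. }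
    assert (Enext : Rabs (cf_err (S n)) = Rabs (cf_err n) / cf_rest theta (S (S n))).
    { replace (cf_err (S n)) with (- cf_err n / cf_rest theta (S (S n))).
      - rewrite Rabs_div, Rabs_Ropp, (Rabs_pos_eq (cf_rest _ _)) by lra. reflexivity.
      - pose proof (cf_err_rest (S n)) as H. rewrite cf_err_prev_S in H.
        field_simplify_eq; lra. }
    assert (Erest : cf_rest theta (S n) = IZR (cf_a theta (S n)) + / cf_rest theta (S (S n))).
    { rewrite (cf_rest_S (S n)), Rinv_inv. unfold cf_frac. ring. }
    rewrite cf_qprev_S, cf_err_prev_S, cf_q_S, plus_IZR, mult_IZR, Enext.
    rewrite Eprev, Erest in IH. rewrite <- IH. field. lra.
Qed.

Lemma cf_approx n :
  exists p : Z, Rabs (IZR (cf_q theta n) * theta - IZR p) <= / IZR (cf_q theta (S n)).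
Proof.
  exists (cf_p n). fold (cf_err n).
  pose proof (cf_err_identity (S n)) as H. rewrite cf_err_prev_S, cf_qprev_S in H.
  pose proof (IZR_le _ _ (cf_q_ge_1 n)). pose proof (IZR_le _ _ (cf_q_ge_1 (S n))).
  pose proof (Rabs_pos (cf_err (S n))).
  apply Rmult_le_reg_l with (IZR (cf_q theta (S n))); [lra|].
  rewrite Rinv_r by lra. nra.
Qed.

End ContinuedFraction.

Lemma Cmod_1_sub_expi t : Cmod (Csub C1 (Cexpi t)) = 2 * Rabs (sin (t / 2)).
Proof.
  replace t with (2 * (t / 2)) at 1 by field. set (s := t / 2).
  unfold Csub, Cadd, Copp, C1, Cexpi, Cmod; simpl.
  rewrite cos_2a_sin, sin_2a.
  replace ((1 + - (1 - 2 * sin s * sin s)) * ((1 + - (1 - 2 * sin s * sin s)) * 1) +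
           (0 + - (2 * sin s * cos s)) * ((0 + - (2 * sin s * cos s)) * 1))
    with (Rsqr (2 * sin s) * (Rsqr (sin s) + Rsqr (cos s))) by (unfold Rsqr; ring).
  rewrite sin2_cos2, Rmult_1_r, sqrt_Rsqr_abs, Rabs_mult, (Rabs_pos_eq 2) by lra.
  reflexivity.
Qed.

Lemma Cmod_Cexpi t : Cmod (Cexpi t) = 1.
Proof.
  unfold Cexpi. change (sqrt (cos t ^ 2 + sin t ^ 2) = 1).
  rewrite <- !Rsqr_pow2, Rplus_comm, sin2_cos2. apply sqrt_1.
Qed.

Lemma Rabs_sin_le x : Rabs (sin x) <= Rabs x.
Proof.
  assert (Hpos : forall y, 0 < y -> Rabs (sin y) <= y).
  { intros y Hy. pose proof (sin_lt_x y Hy). apply Rabs_le. split; [|lra].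
    destruct (Rle_lt_dec 1 y); [pose proof (SIN_bound y); lra|].
    assert (0 < sin y) by (apply sin_gt_0; pose proof PI2_3_2; lra). lra. }
  destruct (Rtotal_order x 0) as [Hx|[->|Hx]].
  - rewrite <- (Rabs_Ropp x), <- (Rabs_Ropp (sin x)), <- sin_neg, (Rabs_pos_eq (- x)) by lra.
    apply Hpos. lra.
  - rewrite sin_0, Rabs_R0. lra.
  - rewrite (Rabs_pos_eq x) by lra. auto.
Qed.

Lemma Rabs_sin_add_INR_PI x (n : nat) : Rabs (sin (x + INR n * PI)) = Rabs (sin x).
Proof.
  induction n as [|n IH]; [simpl; now rewrite Rmult_0_l, Rplus_0_r|].
  rewrite S_INR, <- IH.
  replace (x + (INR n + 1) * PI) with ((x + INR n * PI) + PI) by ring.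
  now rewrite neg_sin, Rabs_Ropp.
Qed.

Lemma Rabs_sin_add_IZR_PI x (m : Z) : Rabs (sin (x + IZR m * PI)) = Rabs (sin x).
Proof.
  destruct (Z_le_gt_dec 0 m).
  - rewrite <- (Z2Nat.id m), <- INR_IZR_INZ by lia. apply Rabs_sin_add_INR_PI.
  - rewrite <- (Rabs_sin_add_INR_PI (x + IZR m * PI) (Z.to_nat (- m))).
    rewrite INR_IZR_INZ, Z2Nat.id, opp_IZR by lia. f_equal. f_equal. ring.
Qed.

Lemma Rabs_sin_PI_ge_half y : 1/6 <= y <= 5/6 -> 1/2 <= Rabs (sin (PI * y)).
Proof.
  intros Hy. pose proof PI2_3_2.
  assert (Hincr : forall v, 1/6 <= v <= 1/2 -> 1/2 <= sin (PI * v)).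
  { intros v Hv. rewrite <- sin_PI6. apply sin_incr_1; nra. }
  destruct (Rle_lt_dec y (1/2)).
  - pose proof (Hincr y ltac:(lra)). rewrite Rabs_pos_eq; lra.
  - replace (PI * y) with (PI - PI * (1 - y)) by ring. rewrite sin_PI_x.
    pose proof (Hincr (1 - y) ltac:(lra)). rewrite Rabs_pos_eq; lra.
Qed.

Lemma Cmod_1_sub_expi_le (x : R) (p : Z) (N : nat) :
  Cmod (Csub C1 (Cexpi (2 * PI * (INR N * x)))) <= 2 * PI * INR N * Rabs (x - IZR p).
Proof.
  rewrite Cmod_1_sub_expi.
  replace (2 * PI * (INR N * x) / 2)
    with (PI * INR N * (x - IZR p) + IZR (Z.of_nat N * p) * PI)
    by (rewrite mult_IZR, <- INR_IZR_INZ; field).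
  rewrite Rabs_sin_add_IZR_PI.
  pose proof PI_RGT_0. pose proof (pos_INR N).
  pose proof (Rabs_sin_le (PI * INR N * (x - IZR p))).
  rewrite !Rabs_mult, (Rabs_pos_eq PI), (Rabs_pos_eq (INR N)) in H1 by lra.
  lra.
Qed.

Lemma Cmod_1_sub_expi_ge (x : R) :
  (forall m : Z, x <> IZR m) -> exists N : nat, 1 <= Cmod (Csub C1 (Cexpi (2 * PI * (INR N * x)))).
Proof.
  intros Hx.
  assert (Hnear : exists (m : Z) (g sg : R),
             0 < g <= 1/2 /\ (sg = 1 \/ sg = -1) /\ x = IZR m + sg * g).
  { destruct (base_Int_part x) as [H1 H2].
    assert (IZR (Int_part x) <> x) by (intros E; apply (Hx (Int_part x)); auto).
    destruct (Rle_lt_dec (x - IZR (Int_part x)) (1/2)).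
    - exists (Int_part x), (x - IZR (Int_part x)), 1. repeat split; try lra.
    - exists (Int_part x + 1)%Z, (IZR (Int_part x) + 1 - x), (-1).
      rewrite plus_IZR. repeat split; lra. }
  destruct Hnear as (m & g & sg & Hg & Hsg & ->).
  (* [N = up (1 / (6 g))] puts [N g] in [[1/6, 5/6]], away from the integers. *)
  destruct (archimed (1 / (6 * g))) as [H1 H2].
  set (Nz := up (1 / (6 * g))) in *.
  assert (Hpos : 0 < 1 / (6 * g)) by (apply Rdiv_lt_0_compat; lra).
  assert (HNz : (0 <= Nz)%Z) by (apply le_IZR; lra).
  assert (HNg : 1/6 <= IZR Nz * g <= 5/6).
  { assert (E : 1 / (6 * g) * g = 1/6) by (field; lra).
    split; nra. }
  exists (Z.to_nat Nz). rewrite Cmod_1_sub_expi, INR_IZR_INZ, Z2Nat.id by exact HNz.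
  replace (2 * PI * (IZR Nz * (IZR m + sg * g)) / 2)
    with (sg * (PI * (IZR Nz * g)) + IZR (Nz * m) * PI) by (rewrite mult_IZR; field).
  rewrite Rabs_sin_add_IZR_PI.
  pose proof (Rabs_sin_PI_ge_half _ HNg).
  destruct Hsg as [-> | ->].
  - rewrite Rmult_1_l. lra.
  - replace (-1 * (PI * (IZR Nz * g))) with (- (PI * (IZR Nz * g))) by ring.
    rewrite sin_neg, Rabs_Ropp. lra.
Qed.

Lemma up_nat (x : R) : x < INR (Z.to_nat (up x)).
Proof.
  destruct (archimed x) as [H1 _].
  destruct (Z_le_gt_dec 0 (up x)).
  - rewrite INR_IZR_INZ, Z2Nat.id by assumption. exact H1.
  - pose proof (pos_INR (Z.to_nat (up x))).
    assert (IZR (up x) < 0) by (apply IZR_lt; lia). lra.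
Qed.

Lemma INR_S_le_pow2 n : INR (S n) <= 2 ^ n.
Proof.
  induction n as [|n IH]; [simpl; lra|].
  rewrite S_INR. change (2 ^ S n) with (2 * 2 ^ n). pose proof (pow_R1_Rle 2 n ltac:(lra)). lra.
Qed.

Lemma INR_sqr_le_pow4 n : INR n ^ 2 <= 4 ^ n.
Proof.
  replace 4 with (2 ^ 2) by ring. rewrite <- pow_mult, Nat.mul_comm, pow_mult.
  pose proof (INR_S_le_pow2 n). rewrite S_INR in H. pose proof (pos_INR n).
  apply pow_incr. lra.
Qed.

Lemma half_pow_mul_pow2 n : (1/2) ^ n * 2 ^ n = 1.
Proof. rewrite <- Rpow_mult_distr. replace (1/2 * 2) with 1 by field. apply pow1. Qed.

Lemma eventually_geom_le (x : nat -> R) (C : R) (n1 : nat) :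
  (forall n, (n1 <= n)%nat -> x n <= C * (1/2) ^ n) ->
  exists K, forall n, x n <= K * (1/2) ^ n.
Proof.
  revert C. induction n1 as [|n1 IH]; intros C Hx; [exists C; intros n; apply Hx; lia|].
  apply (IH (Rmax C (x n1 * 2 ^ n1))). intros n Hn.
  assert (0 < (1/2) ^ n) by (apply pow_lt; lra).
  destruct (Nat.eq_dec n n1) as [->|Hne].
  - apply Rle_trans with (x n1 * 2 ^ n1 * (1/2) ^ n1).
    + rewrite Rmult_assoc, (Rmult_comm (2 ^ n1)), half_pow_mul_pow2. lra.
    + apply Rmult_le_compat_r; [lra|apply Rmax_r].
  - eapply Rle_trans; [apply Hx; lia|].
    apply Rmult_le_compat_r; [lra|apply Rmax_l].
Qed.

Lemma is_series_Cmult_l (c : C) (a : nat -> C) l :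
  is_series a l -> is_series (fun n => c * a n)%C (c * l)%C.
Proof. exact (is_series_scal_l c a l). Qed.

Lemma is_series_lincomb (a b : nat -> C) (c la lb : C) :
  is_series a la -> is_series b lb -> is_series (fun n => a n + c * b n)%C (la + c * lb)%C.
Proof. intros Ha Hb. exact (is_series_plus _ _ _ _ Ha (is_series_Cmult_l c _ _ Hb)). Qed.

Lemma has_cderiv_ext (f g : Cx -> Cx) z d :
  (forall w, f w = g w) -> has_cderiv f z d -> has_cderiv g z d.
Proof.
  intros Hfg. replace g with f; [easy|]. now apply functional_extensionality.
Qed.

Lemma has_cderiv_scal (f : Cx -> Cx) (c : C) z d :
  has_cderiv f z d -> has_cderiv (fun w => c * f w)%C z (c * d)%C.
Proof.
  intros Hf eps Heps.
  destruct (Hf (eps / (Cmod c + 1))) as [delta [Hd Hf']].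
  { pose proof (Cmod_ge_0 c). apply Rdiv_lt_0_compat; lra. }
  exists delta. split; [exact Hd|]. intros w Hw. specialize (Hf' w Hw).
  change (Cmod (c * f w - c * f z - c * d * (w - z)) <= eps * Cmod (w - z)).
  change (Cmod (f w - f z - d * (w - z)) <= eps / (Cmod c + 1) * Cmod (w - z)) in Hf'.
  replace (c * f w - c * f z - c * d * (w - z))%C with (c * (f w - f z - d * (w - z)))%C
    by ring.
  rewrite Cmod_mult. pose proof (Cmod_ge_0 c). pose proof (Cmod_ge_0 (w - z)).
  assert (Hc : Cmod c * (eps / (Cmod c + 1)) <= eps).
  { apply Rmult_le_reg_r with (Cmod c + 1); [lra|].
    replace (Cmod c * (eps / (Cmod c + 1)) * (Cmod c + 1)) with (Cmod c * eps) by (field; lra).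
    nra. }
  apply Rle_trans with (Cmod c * (eps / (Cmod c + 1) * Cmod (w - z))).
  - apply Rmult_le_compat_l; assumption.
  - nra.
Qed.

Lemma Cmod_pow_S_taylor_le (w z : C) (rho : R) m :
  1 <= rho -> Cmod w <= rho -> Cmod z <= rho ->
  Cmod (w ^ S m - z ^ S m - RtoC (INR (S m)) * z ^ m * (w - z))
    <= INR m ^ 2 * rho ^ m * Cmod (w - z) ^ 2.
Proof.
  intros HR Hw Hz. induction m as [|m IH].
  - replace (w ^ 1 - z ^ 1 - RtoC (INR 1) * z ^ 0 * (w - z))%C with (RtoC 0)
      by (apply injective_projections; simpl; ring).
    rewrite Cmod_0. simpl. lra.
  - (* E_(m+1) = w E_m + (m+1) z^m (w - z)^2 *)
    replace (w ^ S (S m) - z ^ S (S m) - RtoC (INR (S (S m))) * z ^ S m * (w - z))%C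
      with (w * (w ^ S m - z ^ S m - RtoC (INR (S m)) * z ^ m * (w - z))
            + RtoC (INR (S m)) * z ^ m * ((w - z) * (w - z)))%C
      by (rewrite !S_INR; apply injective_projections; simpl; ring).
    eapply Rle_trans; [apply Cmod_triangle|].
    rewrite !Cmod_mult, Cmod_R, Cmod_pow, Rabs_pos_eq by apply pos_INR.
    set (E := Cmod (w ^ S m - z ^ S m - RtoC (INR (S m)) * z ^ m * (w - z))) in *.
    set (h := Cmod (w - z)) in *.
    assert (0 <= E) by apply Cmod_ge_0. assert (0 <= h) by apply Cmod_ge_0.
    pose proof (Cmod_ge_0 w).
    assert (Hzm : Cmod z ^ m <= rho ^ m) by (apply pow_incr; pose proof (Cmod_ge_0 z); lra).
    assert (HRm : 1 <= rho ^ m) by (apply pow_R1_Rle; lra).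
    rewrite !S_INR. change (rho ^ S m) with (rho * rho ^ m). pose proof (pos_INR m).
    set (x := INR m) in *. set (A := rho ^ m) in *.
    assert (Cmod w * E <= rho * (x ^ 2 * A * h ^ 2)) by (apply Rmult_le_compat; lra).
    assert ((x + 1) * Cmod z ^ m * (h * h) <= (x + 1) * (rho * A) * (h * h)).
    { apply Rmult_le_compat_r; [nra|]. apply Rmult_le_compat_l; nra. }
    assert (0 <= rho * A * (h * h)) by (apply Rmult_le_pos; nra).
    nra.
Qed.

Section LacunarySeries.
Variables (b : nat -> C) (e : nat -> nat) (rho K : R).
Hypothesis HR : 1 <= rho.
Hypothesis Hb : forall n, Cmod (b n) * (4 * rho) ^ e n <= K * (1/2) ^ n.

Lemma lacunary_term_le w n : Cmod w <= rho -> Cmod (b n * w ^ e n) <= K * (1/2) ^ n.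
Proof.
  intros Hw. rewrite Cmod_mult, Cmod_pow. eapply Rle_trans; [|apply Hb].
  apply Rmult_le_compat_l; [apply Cmod_ge_0|].
  apply pow_incr. pose proof (Cmod_ge_0 w). lra.
Qed.

Lemma lacunary_deriv_term_le w n :
  Cmod w <= rho -> Cmod (b n * (RtoC (INR (S (e n))) * w ^ e n)) <= K * (1/2) ^ n.
Proof.
  intros Hw. eapply Rle_trans; [|apply Hb].
  rewrite !Cmod_mult, Cmod_R, Cmod_pow, Rabs_pos_eq by apply pos_INR.
  apply Rmult_le_compat_l; [apply Cmod_ge_0|].
  replace (4 * rho) with (2 * (2 * rho)) by ring. rewrite Rpow_mult_distr, (Rpow_mult_distr 2 rho).
  pose proof (INR_S_le_pow2 (e n)). pose proof (Cmod_ge_0 w).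
  assert (Cmod w ^ e n <= rho ^ e n) by (apply pow_incr; lra).
  assert (0 <= Cmod w ^ e n) by (apply pow_le; lra).
  assert (1 <= 2 ^ e n) by (apply pow_R1_Rle; lra).
  assert (1 <= rho ^ e n) by (apply pow_R1_Rle; lra).
  pose proof (pos_INR (S (e n))).
  apply Rle_trans with (2 ^ e n * rho ^ e n); [apply Rmult_le_compat; lra|].
  rewrite <- (Rmult_1_l (2 ^ e n * rho ^ e n)) at 1.
  apply Rmult_le_compat_r; [apply Rmult_le_pos|]; lra.
Qed.

Lemma lacunary_taylor_le w z n : Cmod w <= rho -> Cmod z <= rho ->
  Cmod (w * (b n * w ^ e n) + - z * (b n * z ^ e n)
        + - (w - z) * (b n * (RtoC (INR (S (e n))) * z ^ e n)))
    <= K * Cmod (w - z) ^ 2 * (1/2) ^ n.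
Proof.
  intros Hw Hz.
  replace (w * (b n * w ^ e n) + - z * (b n * z ^ e n)
           + - (w - z) * (b n * (RtoC (INR (S (e n))) * z ^ e n)))%C
    with (b n * (w ^ S (e n) - z ^ S (e n) - RtoC (INR (S (e n))) * z ^ e n * (w - z)))%C
    by (simpl; ring).
  rewrite Cmod_mult.
  pose proof (Cmod_pow_S_taylor_le w z rho (e n) HR Hw Hz) as Htaylor.
  assert (Hpow : INR (e n) ^ 2 * rho ^ e n <= (4 * rho) ^ e n).
  { rewrite Rpow_mult_distr. apply Rmult_le_compat_r; [apply pow_le; lra|].
    apply INR_sqr_le_pow4. }
  pose proof (Cmod_ge_0 (b n)). pose proof (pow2_ge_0 (Cmod (w - z))).
  pose proof (Hb n).
  apply Rle_trans with (Cmod (b n) * ((4 * rho) ^ e n * Cmod (w - z) ^ 2)).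
  - apply Rmult_le_compat_l; [lra|]. eapply Rle_trans; [exact Htaylor|].
    apply Rmult_le_compat_r; lra.
  - nra.
Qed.

Lemma has_cderiv_lacunary z : Cmod z + 1 <= rho ->
  has_cderiv (fun w => w * Csum (fun n => b n * w ^ e n))%C z
    (Csum (fun n => b n * (RtoC (INR (S (e n))) * z ^ e n))%C).
Proof.
  intros Hz.
  assert (HK : 0 <= K).
  { pose proof (Hb 0). pose proof (Cmod_ge_0 (b 0)).
    assert (0 < (4 * rho) ^ e 0) by (apply pow_lt; lra). simpl in *. nra. }
  intros eps Heps.
  set (delta := Rmin 1 (eps / (2 * K + 1))).
  assert (Hdelta : 0 < delta) by (apply Rmin_pos; [lra|apply Rdiv_lt_0_compat; lra]).
  assert (Hdelta1 : delta <= 1) by apply Rmin_l.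
  assert (Hdelta2 : delta <= eps / (2 * K + 1)) by apply Rmin_r.
  exists delta. split; [exact Hdelta|]. intros w Hwz.
  change (Cmod (w - z) < delta) in Hwz.
  set (h := Cmod (w - z)) in *. assert (Hh : 0 <= h) by apply Cmod_ge_0.
  assert (Hw : Cmod w <= rho).
  { replace w with ((w - z) + z)%C by ring. pose proof (Cmod_triangle (w - z) z).
    fold h in H. lra. }
  assert (Hz' : Cmod z <= rho) by lra.
  set (tw := fun n => (b n * w ^ e n)%C). set (tz := fun n => (b n * z ^ e n)%C).
  set (d := fun n => (b n * (RtoC (INR (S (e n))) * z ^ e n))%C).
  destruct (Csum_dominated_geom tw K (fun n => lacunary_term_le w n Hw)) as [Sw _].
  destruct (Csum_dominated_geom tz K (fun n => lacunary_term_le z n Hz')) as [Sz _].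
  destruct (Csum_dominated_geom d K (fun n => lacunary_deriv_term_le z n Hz')) as [Sd _].
  set (r := fun n => (w * tw n + - z * tz n + - (w - z) * d n)%C).
  assert (Sr : is_series r (w * Csum tw + - z * Csum tz + - (w - z) * Csum d)%C).
  { apply (is_series_lincomb (fun n => w * tw n + - z * tz n)%C); [|exact Sd].
    apply (is_series_lincomb (fun n => w * tw n)%C); [|exact Sz].
    exact (is_series_Cmult_l w _ _ Sw). }
  destruct (Csum_dominated_geom r (K * h ^ 2) (fun n => lacunary_taylor_le w z n Hw Hz'))
    as [_ Hr].
  rewrite (Csum_eq r _ Sr) in Hr.
  change (Cmod (w * Csum tw - z * Csum tz - Csum d * (w - z)) <= eps * h).
  replace (w * Csum tw - z * Csum tz - Csum d * (w - z))%C
    with (w * Csum tw + - z * Csum tz + - (w - z) * Csum d)%C by ring.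
  eapply Rle_trans; [exact Hr|].
  assert (Heps' : 2 * K * h <= eps).
  { apply Rle_trans with (2 * K * (eps / (2 * K + 1))); [apply Rmult_le_compat_l; lra|].
    apply Rmult_le_reg_r with (2 * K + 1); [lra|].
    replace (2 * K * (eps / (2 * K + 1)) * (2 * K + 1)) with (2 * K * eps) by (field; lra).
    nra. }
  replace (2 * (K * h ^ 2)) with (2 * K * h * h) by ring.
  apply Rmult_le_compat_r; lra.
Qed.

End LacunarySeries.

Section UnboundedSet.
Variable D : nat -> (nat -> C) -> C.
Hypothesis D_lincomb : forall N u v (c : C) Bu Bv,
  (forall m, Cmod (u m) <= Bu) -> (forall m, Cmod (v m) <= Bv) ->
  D N (fun m => u m + c * v m)%C = (D N u + c * D N v)%C.
Hypothesis D_bound : forall N, exists L,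
  forall u B, (forall m, Cmod (u m) <= B) -> Cmod (D N u) <= B * L.

Definition D_unbounded (u : nat -> C) := bounded_seq u /\ forall M, exists N, M < Cmod (D N u).

Lemma D_exceeds_open (j : nat) :
  linf_open (fun u => bounded_seq u /\ exists N, INR j < Cmod (D N u)).
Proof.
  split; [now intros u []|].
  intros u [[Bu Hu] [N HN]]. change (forall m, Cmod (u m) <= Bu) in Hu.
  destruct (D_bound N) as [L HL].
  assert (HL0 : 0 <= L).
  { specialize (HL u Bu Hu). pose proof (Cmod_ge_0 (D N u)).
    assert (0 <= Bu) by (pose proof (Hu 0%nat); pose proof (Cmod_ge_0 (u 0%nat)); lra).
    pose proof (pos_INR j). destruct (Rle_lt_dec 0 L); [lra|]. nra. }
  set (gap := Cmod (D N u) - INR j).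
  exists (gap / (L + 1)). split; [apply Rdiv_lt_0_compat; unfold gap; lra|].
  intros v [Bv Hv] Hvu. split; [now exists Bv|]. exists N.
  change (forall m, Cmod (v m) <= Bv) in Hv.
  change (forall m, Cmod (v m - u m) <= gap / (L + 1)) in Hvu.
  assert (Ev : v = (fun m => u m + RtoC 1 * (v m - u m))%C).
  { apply functional_extensionality. intros m. apply injective_projections; simpl; ring. }
  assert (Hd : Cmod (D N (fun m => v m - u m)%C) <= gap / (L + 1) * L) by (apply HL; exact Hvu).
  assert (gap / (L + 1) * L < gap).
  { apply Rmult_lt_reg_r with (L + 1); [lra|].
    replace (gap / (L + 1) * L * (L + 1)) with (gap * L) by (field; lra). unfold gap in *. nra. }
  assert (Hb : forall m, Cmod (v m - u m)%C <= Bv + Bu).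
  { intros m. pose proof (Cmod_triangle (v m) (- u m)). rewrite Cmod_opp in H0.
    specialize (Hu m). specialize (Hv m). unfold Cminus. lra. }
  rewrite Ev, (D_lincomb N u _ (RtoC 1) Bu (Bv + Bu) Hu Hb).
  pose proof (Cmod_sub_Cmod_le (D N u) (RtoC 1 * D N (fun m => v m - u m))%C) as Hge.
  rewrite Cmod_mult, Cmod_1, Rmult_1_l in Hge. unfold gap in *. lra.
Qed.

Lemma D_unbounded_Gdelta : linf_Gdelta D_unbounded.
Proof.
  exists (fun j u => bounded_seq u /\ exists N, INR j < Cmod (D N u)).
  split; [exact D_exceeds_open|]. intros u. split.
  - intros [Hb HD] j. split; [exact Hb|]. apply HD.
  - intros HO. split; [apply (HO 0%nat)|]. intros M.
    destruct (HO (Z.to_nat (up M))) as [_ [N HN]]. exists N.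
    pose proof (up_nat M). lra.
Qed.

(* If one bounded sequence has an unbounded orbit, adding a small multiple of it to a
   sequence with bounded orbit produces an unbounded one. *)
Lemma D_unbounded_dense : (exists w, D_unbounded w) -> linf_dense D_unbounded.
Proof.
  intros [w [[Bw Hw] Hwu]] u [Bu Hu] eps Heps.
  change (forall m, Cmod (w m) <= Bw) in Hw. change (forall m, Cmod (u m) <= Bu) in Hu.
  destruct (classic (forall M, exists N, M < Cmod (D N u))) as [Hall|Hnot].
  { exists u. split; [split; [now exists Bu|exact Hall]|].
    intros m. change (Cmod (u m - u m) <= eps).
    replace (u m - u m)%C with (RtoC 0) by (apply injective_projections; simpl; ring).
    rewrite Cmod_0. lra. }
  apply not_all_ex_not in Hnot. destruct Hnot as [M0 HM0].
  assert (HuM : forall N, Cmod (D N u) <= M0).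
  { intros N. apply Rnot_lt_le. intros H. apply HM0. now exists N. }
  assert (HBw : 0 <= Bw) by (pose proof (Hw 0%nat); pose proof (Cmod_ge_0 (w 0%nat)); lra).
  set (c := eps / (Bw + 1)).
  assert (Hc : 0 < c) by (apply Rdiv_lt_0_compat; lra).
  assert (HcBw : c * Bw <= eps).
  { unfold c. apply Rmult_le_reg_r with (Bw + 1); [lra|].
    replace (eps / (Bw + 1) * Bw * (Bw + 1)) with (eps * Bw) by (field; lra). nra. }
  assert (Hcw : forall m, Cmod (RtoC c * w m) <= eps).
  { intros m. rewrite Cmod_mult, Cmod_R, Rabs_pos_eq by lra.
    pose proof (Hw m). pose proof (Cmod_ge_0 (w m)). nra. }
  exists (fun m => u m + RtoC c * w m)%C. split; [split|].
  - exists (Bu + eps). intros m. change (Cmod (u m + RtoC c * w m) <= Bu + eps).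
    pose proof (Cmod_triangle (u m) (RtoC c * w m)). pose proof (Hu m). pose proof (Hcw m).
    lra.
  - intros M. destruct (Hwu ((M + M0) / c)) as [N HN]. exists N.
    rewrite (D_lincomb N u w (RtoC c) Bu Bw Hu Hw).
    pose proof (Cmod_sub_Cmod_le (RtoC c * D N w) (D N u)) as Hge.
    rewrite Cmod_mult, Cmod_R, Rabs_pos_eq in Hge by lra.
    assert (M + M0 < c * Cmod (D N w)).
    { apply Rmult_lt_reg_r with (/ c); [apply Rinv_0_lt_compat; lra|].
      replace (c * Cmod (D N w) * / c) with (Cmod (D N w)) by (field; lra).
      exact HN. }
    replace (D N u + RtoC c * D N w)%C with (RtoC c * D N w + D N u)%C by ring.
    specialize (HuM N). lra.
  - intros m. change (Cmod (u m + RtoC c * w m - u m) <= eps).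
    replace (u m + RtoC c * w m - u m)%C with (RtoC c * w m)%C by ring. apply Hcw.
Qed.

End UnboundedSet.

Section LacunaryPhi.
Variable theta : R.
Hypothesis Hirr : irrational theta.
Hypothesis Hgrowth : cv_infty (fun n => ln (IZR (cf_q theta (S n))) / IZR (cf_q theta n)).
Variable k : nat -> nat.
Hypothesis Hk : forall n, (k n < k (S n))%nat.

Definition qk n := cf_q theta (k n).
Definition Qk n := Z.to_nat (qk n).
Definition rot_defect (N n : nat) : C :=
  Csub C1 (Cexpi (2 * PI * IZR (qk n) * (INR N * theta))).

Lemma rot_defect_eq N n :
  rot_defect N n = Csub C1 (Cexpi (2 * PI * (INR N * (IZR (qk n) * theta)))).
Proof.
  unfold rot_defect.
  now replace (2 * PI * IZR (qk n) * (INR N * theta)) with (2 * PI * (INR N * (IZR (qk n) * theta)))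
    by ring.
Qed.

Lemma k_lt m n : (m < n)%nat -> (k m < k n)%nat.
Proof. induction 1 as [|n _ IH]; [apply Hk|]. specialize (Hk n). lia. Qed.

Lemma k_ge n : (n <= k n)%nat.
Proof. induction n as [|n IH]; [lia|]. specialize (Hk n). lia. Qed.

Lemma qk_ge_1 n : (1 <= qk n)%Z.
Proof. apply cf_q_ge_1, Hirr. Qed.

Lemma INR_Qk n : INR (Qk n) = IZR (qk n).
Proof. unfold Qk. rewrite INR_IZR_INZ, Z2Nat.id; [easy|]. pose proof (qk_ge_1 n). lia. Qed.

Lemma Qk_ge n : (n <= Qk n)%nat.
Proof.
  unfold Qk, qk. pose proof (cf_q_ge_index theta Hirr (k n)). pose proof (k_ge n). lia.
Qed.

Lemma Qk_le m n : (m <= n)%nat -> (Qk m <= Qk n)%nat.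
Proof.
  intros Hmn. assert (Hkmn : (k m <= k n)%nat).
  { destruct (Nat.eq_dec m n) as [->|Hne]; [lia|]. pose proof (k_lt m n). lia. }
  pose proof (cf_q_le theta Hirr _ _ Hkmn). pose proof (qk_ge_1 m). unfold Qk, qk in *. lia.
Qed.

Lemma Qk_inj m n : (2 <= m)%nat -> (2 <= n)%nat -> Qk m = Qk n -> m = n.
Proof.
  intros Hm Hn E. pose proof (qk_ge_1 m). pose proof (qk_ge_1 n). unfold Qk, qk in *.
  destruct (Nat.lt_total m n) as [Hlt|[Heq|Hlt]]; [exfalso|exact Heq|exfalso].
  - pose proof (k_lt m n Hlt). pose proof (k_ge n).
    pose proof (cf_q_lt theta Hirr (k m) (k n) ltac:(lia) ltac:(lia)). lia.
  - pose proof (k_lt n m Hlt). pose proof (k_ge m).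
    pose proof (cf_q_lt theta Hirr (k n) (k m) ltac:(lia) ltac:(lia)). lia.
Qed.

Lemma rot_defect_le_2 N n : Cmod (rot_defect N n) <= 2.
Proof.
  unfold rot_defect. rewrite Cmod_1_sub_expi.
  set (t := 2 * PI * IZR (qk n) * (INR N * theta) / 2).
  assert (Rabs (sin t) <= 1) by (apply Rabs_le; apply SIN_bound). lra.
Qed.

Lemma rot_defect_le N n :
  Cmod (rot_defect N n) <= 2 * PI * INR N / IZR (cf_q theta (S (k n))).
Proof.
  destruct (cf_approx theta Hirr (k n)) as [p Hp]. fold (qk n) in Hp.
  pose proof (IZR_le _ _ (cf_q_ge_1 theta Hirr (S (k n)))) as Hq.
  rewrite rot_defect_eq. eapply Rle_trans; [apply (Cmod_1_sub_expi_le _ p)|].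
  unfold Rdiv. apply Rmult_le_compat_l; [|exact Hp].
  pose proof PI_RGT_0. pose proof (pos_INR N). nra.
Qed.

Lemma rot_defect_ge n : exists N, 1 <= Cmod (rot_defect N n).
Proof.
  destruct (Cmod_1_sub_expi_ge (IZR (qk n) * theta)) as [N HN].
  - intros m E. apply Hirr. exists m, (qk n). pose proof (qk_ge_1 n). split; [lia|].
    rewrite <- E. field. apply not_0_IZR. lia.
  - exists N. rewrite rot_defect_eq. exact HN.
Qed.

Lemma cf_q_next_dominates (A rho : R) : 1 <= rho ->
  exists n1, forall n, (n1 <= n)%nat -> A * rho ^ Qk n <= IZR (cf_q theta (S (k n))).
Proof.
  (* Eventually [ln q_{k_n + 1} > q_{k_n} ln s], with [s = max A 1 * rho]. *)
  intros Hrho. set (s := Rmax A 1 * rho).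
  assert (Hs : 1 <= s) by (unfold s; pose proof (Rmax_r A 1); nra).
  destruct (Hgrowth (ln s)) as [n1 Hn1]. exists n1. intros n Hn.
  specialize (Hn1 (k n) ltac:(pose proof (k_ge n); lia)).
  fold (qk n) in Hn1. rewrite <- INR_Qk in Hn1.
  assert (HQ : 1 <= INR (Qk n)) by (rewrite INR_Qk; apply IZR_le, qk_ge_1).
  pose proof (IZR_le _ _ (cf_q_ge_1 theta Hirr (S (k n)))) as Hq.
  assert (Hlt : ln (s ^ Qk n) < ln (IZR (cf_q theta (S (k n))))).
  { rewrite ln_pow by lra. apply Rmult_lt_reg_r with (/ INR (Qk n)); [apply Rinv_0_lt_compat; lra|].
    replace (INR (Qk n) * ln s * / INR (Qk n)) with (ln s) by (field; lra). exact Hn1. }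
  apply ln_lt_inv in Hlt; [|apply pow_lt; lra|lra].
  apply Rle_trans with (s ^ Qk n); [|lra].
  unfold s. rewrite Rpow_mult_distr.
  assert (HA : A <= Rmax A 1 ^ Qk n).
  { assert (HQ1 : (1 <= Qk n)%nat) by (pose proof (qk_ge_1 n); unfold Qk; lia).
    pose proof (Rle_pow (Rmax A 1) 1 (Qk n) (Rmax_r A 1) HQ1). simpl in H.
    pose proof (Rmax_l A 1). lra. }
  assert (1 <= rho ^ Qk n) by (apply pow_R1_Rle; lra).
  assert (0 < Rmax A 1 ^ Qk n) by (apply pow_lt; pose proof (Rmax_r A 1); lra).
  set (a := Rmax A 1 ^ Qk n) in *. set (r := rho ^ Qk n) in *. nra.
Qed.

Lemma rot_defect_dominated N rho : 1 <= rho ->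
  exists K, forall n, Cmod (rot_defect N n) * rho ^ Qk n <= K * (1/2) ^ n.
Proof.
  intros Hrho. destruct (cf_q_next_dominates 1 (2 * rho) ltac:(lra)) as [n1 Hn1].
  apply (eventually_geom_le _ (2 * PI * INR N) n1). intros n Hn.
  specialize (Hn1 n Hn). rewrite Rmult_1_l, Rpow_mult_distr in Hn1.
  pose proof (rot_defect_le N n) as Hr.
  pose proof (Cmod_ge_0 (rot_defect N n)).
  assert (H2 : 2 ^ n <= 2 ^ Qk n) by (apply Rle_pow; [lra|apply Qk_ge]).
  assert (HP : 0 < rho ^ Qk n) by (apply pow_lt; lra).
  assert (HU : 0 < 2 ^ n) by (apply pow_lt; lra).
  pose proof (half_pow_mul_pow2 n) as Hhalf.
  pose proof PI_RGT_0. pose proof (pos_INR N).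
  set (q := IZR (cf_q theta (S (k n)))) in *. set (c := Cmod (rot_defect N n)) in *.
  set (P := rho ^ Qk n) in *. set (T := (1/2) ^ n) in *. set (U := 2 ^ n) in *.
  set (V := 2 ^ Qk n) in *.
  assert (Hq : U * P <= q) by nra.
  assert (Hcq : c * q <= 2 * PI * INR N).
  { apply Rmult_le_reg_r with (/ q); [apply Rinv_0_lt_compat; nra|].
    rewrite Rmult_assoc, Rinv_r by nra. unfold Rdiv in Hr. lra. }
  apply Rmult_le_reg_r with U; [exact HU|].
  replace (2 * PI * INR N * T * U) with (2 * PI * INR N * (T * U)) by ring.
  rewrite Hhalf, Rmult_1_r. apply Rle_trans with (c * q); [|exact Hcq].
  replace (c * P * U) with (c * (U * P)) by ring. apply Rmult_le_compat_l; assumption.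
Qed.

Variable z : C.
Hypothesis Hz : 1 < Cmod z.

Definition radius := Cmod z + 1.

Definition phi_coef (N : nat) (u : nat -> C) (n : nat) : C := (u (Qk n) * rot_defect N n)%C.

Definition Dphi (N : nat) (u : nat -> C) : C :=
  (Cexpi (2 * PI * (INR N * theta))
   * Csum (fun n => phi_coef N u n * (RtoC (INR (S (Qk n))) * z ^ Qk n)))%C.

Lemma radius_ge_1 : 1 <= radius.
Proof. unfold radius. lra. Qed.

Lemma rot_defect_dominated_radius N :
  exists K, forall n, Cmod (rot_defect N n) * (4 * radius) ^ Qk n <= K * (1/2) ^ n.
Proof. apply rot_defect_dominated. pose proof radius_ge_1. lra. Qed.

Lemma phi_coef_dominated N u B K :
  (forall m, Cmod (u m) <= B) ->
  (forall n, Cmod (rot_defect N n) * (4 * radius) ^ Qk n <= K * (1/2) ^ n) ->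
  forall n, Cmod (phi_coef N u n) * (4 * radius) ^ Qk n <= B * K * (1/2) ^ n.
Proof.
  intros Hu HK n. unfold phi_coef. rewrite Cmod_mult.
  specialize (Hu (Qk n)). specialize (HK n).
  pose proof (Cmod_ge_0 (u (Qk n))). pose proof (Cmod_ge_0 (rot_defect N n)).
  assert (0 <= (4 * radius) ^ Qk n) by (apply pow_le; pose proof radius_ge_1; lra).
  set (P := (4 * radius) ^ Qk n) in *. set (T := (1/2) ^ n) in *.
  set (a := Cmod (u (Qk n))) in *. set (c := Cmod (rot_defect N n)) in *.
  replace (a * c * P) with (a * (c * P)) by ring. replace (B * K * T) with (B * (K * T)) by ring.
  apply Rmult_le_compat; try lra. apply Rmult_le_pos; lra.
Qed.

Lemma phi_lacunary N u w :
  phi (INR N * theta) qk u w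
  = (Cexpi (2 * PI * (INR N * theta)) * (w * Csum (fun n => phi_coef N u n * w ^ Qk n)))%C.
Proof.
  unfold phi.
  change ((w * Cexpi (2 * PI * (INR N * theta))) * Csum (fun n => phi_coef N u n * w ^ Qk n)
          = Cexpi (2 * PI * (INR N * theta)) * (w * Csum (fun n => phi_coef N u n * w ^ Qk n)))%C.
  ring.
Qed.

Lemma has_cderiv_phi N u B : (forall m, Cmod (u m) <= B) ->
  has_cderiv (phi (INR N * theta) qk u) z (Dphi N u).
Proof.
  intros Hu. destruct (rot_defect_dominated_radius N) as [K HK].
  pose proof (has_cderiv_lacunary (phi_coef N u) Qk radius (B * K) radius_ge_1
                (phi_coef_dominated N u B K Hu HK) z (Rle_refl _)) as Hderiv.
  apply (has_cderiv_scal _ (Cexpi (2 * PI * (INR N * theta)))) in Hderiv.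
  eapply has_cderiv_ext; [|exact Hderiv].
  intros w. symmetry. apply phi_lacunary.
Qed.

Lemma Dphi_terms_dominated N u B K :
  (forall m, Cmod (u m) <= B) ->
  (forall n, Cmod (rot_defect N n) * (4 * radius) ^ Qk n <= K * (1/2) ^ n) ->
  forall n, Cmod (phi_coef N u n * (RtoC (INR (S (Qk n))) * z ^ Qk n)) <= B * K * (1/2) ^ n.
Proof.
  intros Hu HK n. apply (lacunary_deriv_term_le (phi_coef N u) Qk radius); [exact radius_ge_1| |].
  - exact (phi_coef_dominated N u B K Hu HK).
  - unfold radius. lra.
Qed.

Lemma Dphi_bound N : exists L, forall u B, (forall m, Cmod (u m) <= B) -> Cmod (Dphi N u) <= B * L.
Proof.
  destruct (rot_defect_dominated_radius N) as [K HK].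
  exists (2 * K). intros u B Hu.
  destruct (Csum_dominated_geom _ _ (Dphi_terms_dominated N u B K Hu HK)) as [_ Hsum].
  unfold Dphi. rewrite Cmod_mult, Cmod_Cexpi. lra.
Qed.

Lemma Dphi_lincomb N u v (c : C) Bu Bv :
  (forall m, Cmod (u m) <= Bu) -> (forall m, Cmod (v m) <= Bv) ->
  Dphi N (fun m => u m + c * v m)%C = (Dphi N u + c * Dphi N v)%C.
Proof.
  intros Hu Hv. destruct (rot_defect_dominated_radius N) as [K HK].
  destruct (Csum_dominated_geom _ _ (Dphi_terms_dominated N u Bu K Hu HK)) as [Su _].
  destruct (Csum_dominated_geom _ _ (Dphi_terms_dominated N v Bv K Hv HK)) as [Sv _].
  pose proof (is_series_lincomb _ _ c _ _ Su Sv) as Suv.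
  apply (is_series_ext _ (fun n => phi_coef N (fun m => u m + c * v m)%C n
                                   * (RtoC (INR (S (Qk n))) * z ^ Qk n))%C) in Suv;
    [|intros n; unfold phi_coef; simpl; ring].
  unfold Dphi. rewrite (Csum_eq _ _ Suv). ring.
Qed.

Definition term_size n := INR (S (Qk n)) * Cmod z ^ Qk n.

Lemma term_size_le m n : (m <= n)%nat -> term_size m <= term_size n.
Proof.
  intros Hmn. pose proof (Qk_le m n Hmn). unfold term_size.
  apply Rmult_le_compat; [apply pos_INR|apply pow_le, Cmod_ge_0|apply le_INR; lia|].
  apply Rle_pow; lra || lia.
Qed.

Lemma term_size_ge n : INR (S n) <= term_size n.
Proof.
  unfold term_size. pose proof (pow_R1_Rle (Cmod z) (Qk n) ltac:(lra)).
  pose proof (le_INR _ _ (le_n_S _ _ (Qk_ge n))). pose proof (pos_INR (S n)).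
  set (P := Cmod z ^ Qk n) in *. nra.
Qed.

Lemma Cmod_Dphi_term N u n :
  Cmod (phi_coef N u n * (RtoC (INR (S (Qk n))) * z ^ Qk n))
  = Cmod (u (Qk n)) * Cmod (rot_defect N n) * term_size n.
Proof.
  unfold phi_coef, term_size.
  rewrite !Cmod_mult, Cmod_R, Cmod_pow, Rabs_pos_eq by apply pos_INR. ring.
Qed.

Lemma term_size_mul_pow2_le n : term_size n * 2 ^ S n <= 2 * (4 * Cmod z) ^ Qk n.
Proof.
  unfold term_size. change (2 ^ S n) with (2 * 2 ^ n).
  replace (4 * Cmod z) with (2 * 2 * Cmod z) by ring. rewrite !Rpow_mult_distr.
  pose proof (INR_S_le_pow2 (Qk n)).
  assert (2 ^ n <= 2 ^ Qk n) by (apply Rle_pow; [lra|apply Qk_ge]).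
  assert (0 <= Cmod z ^ Qk n) by (apply pow_le, Cmod_ge_0).
  assert (0 <= 2 ^ n) by (apply pow_le; lra).
  pose proof (pos_INR (S (Qk n))).
  set (a := 2 ^ Qk n) in *. set (b := Cmod z ^ Qk n) in *. set (c := 2 ^ n) in *.
  set (d := INR (S (Qk n))) in *.
  assert (d * b * c <= a * b * a) by (apply Rmult_le_compat; nra). nra.
Qed.

(* One step of the gliding hump: given the last index [p] and the largest frequency
   [Nm] used so far, a new index [n] whose term dwarfs the terms up to [p] and is
   negligible at every frequency up to [Nm], and a frequency [N] activating it. *)
Definition hump_step (p Nm n N : nat) : Prop :=
  (p < n)%nat /\
  2 ^ S (S p) * term_size p + INR p + 3 <= term_size n /\
  2 * PI * INR Nm * term_size n * 2 ^ S n <= IZR (cf_q theta (S (k n))) /\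
  1 <= Cmod (rot_defect N n).

Lemma hump_step_exists p Nm : exists nN : nat * nat, hump_step p Nm (fst nN) (snd nN).
Proof.
  destruct (cf_q_next_dominates (4 * PI * INR Nm) (4 * Cmod z) ltac:(lra)) as [n1 Hn1].
  set (X := 2 ^ S (S p) * term_size p + INR p + 3).
  set (n := Nat.max n1 (Nat.max (S p) (Z.to_nat (up X)))).
  destruct (rot_defect_ge n) as [N HN].
  exists (n, N). cbn [fst snd]. split; [|split; [|split]]; [lia| | |exact HN].
  - pose proof (up_nat X). pose proof (le_INR (Z.to_nat (up X)) (S n) ltac:(lia)).
    pose proof (term_size_ge n). fold X. lra.
  - specialize (Hn1 n ltac:(lia)). pose proof (term_size_mul_pow2_le n).
    pose proof PI_RGT_0. pose proof (pos_INR Nm).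
    assert (0 <= 2 * PI * INR Nm) by nra.
    replace (2 * PI * INR Nm * term_size n * 2 ^ S n)
      with (2 * PI * INR Nm * (term_size n * 2 ^ S n)) by ring.
    eapply Rle_trans; [apply Rmult_le_compat_l; eassumption|]. lra.
Qed.

Definition hump_choice (p Nm : nat) : nat * nat :=
  proj1_sig (constructive_indefinite_description _ (hump_step_exists p Nm)).

Lemma hump_choice_spec p Nm :
  hump_step p Nm (fst (hump_choice p Nm)) (snd (hump_choice p Nm)).
Proof. unfold hump_choice. now destruct (constructive_indefinite_description _ _). Qed.

(* The state [(p_j, Nm_j)] before step [j]; starting from [p_0 = 1] keeps every hump
   at an index [>= 2], where [Qk] is injective. *)
Fixpoint hump_state (j : nat) : nat * nat :=
  match j with
  | O => (1%nat, 0%nat)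
  | S j => let s := hump_state j in
           let c := hump_choice (fst s) (snd s) in
           (fst c, Nat.max (snd s) (snd c))
  end.

Definition hump_p j := fst (hump_state j).
Definition hump_Nmax j := snd (hump_state j).
Definition hump_n j := fst (hump_choice (hump_p j) (hump_Nmax j)).
Definition hump_N j := snd (hump_choice (hump_p j) (hump_Nmax j)).

Lemma hump_spec j : hump_step (hump_p j) (hump_Nmax j) (hump_n j) (hump_N j).
Proof. apply hump_choice_spec. Qed.

Lemma hump_p_lt_n j : (hump_p j < hump_n j)%nat.
Proof. apply hump_spec. Qed.

Lemma hump_p_ge j : (S j <= hump_p j)%nat.
Proof.
  induction j as [|j IH]; [unfold hump_p; simpl; lia|].
  pose proof (hump_p_lt_n j). change (hump_p (S j)) with (hump_n j). lia.
Qed.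

Lemma hump_n_le_p i j : (i < j)%nat -> (hump_n i <= hump_p j)%nat.
Proof.
  induction 1 as [|j _ IH]; change (hump_p (S ?j)) with (hump_n j); [lia|].
  pose proof (hump_p_lt_n j). lia.
Qed.

Lemma hump_N_le i j : (i < j)%nat -> (hump_N i <= hump_Nmax j)%nat.
Proof.
  induction 1 as [|j _ IH]; change (hump_Nmax (S ?j)) with (Nat.max (hump_Nmax j) (hump_N j));
    lia.
Qed.

Definition hump_seq (m : nat) : C :=
  if excluded_middle_informative (exists j, m = Qk (hump_n j)) then RtoC 1 else RtoC 0.

Lemma hump_seq_le_1 m : Cmod (hump_seq m) <= 1.
Proof.
  unfold hump_seq. destruct (excluded_middle_informative _); [rewrite Cmod_1|rewrite Cmod_0]; lra.
Qed.

Lemma hump_seq_at j : hump_seq (Qk (hump_n j)) = RtoC 1.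
Proof.
  unfold hump_seq. destruct (excluded_middle_informative _) as [_|H]; [easy|].
  exfalso. apply H. now exists j.
Qed.

Lemma hump_seq_off n : (2 <= n)%nat -> (forall j, n <> hump_n j) -> hump_seq (Qk n) = RtoC 0.
Proof.
  intros Hn Hoff. unfold hump_seq. destruct (excluded_middle_informative _) as [[j Hj]|_]; [|easy].
  exfalso. apply (Hoff j). apply Qk_inj; [exact Hn| |exact Hj].
  pose proof (hump_p_lt_n j). pose proof (hump_p_ge j). lia.
Qed.

(* A later hump [n_i] sees the frequency [N_j <= Nm_i], for which its term was made
   negligible. *)
Lemma hump_far_term j n : (hump_p j < n)%nat -> n <> hump_n j ->
  Cmod (hump_seq (Qk n)) * Cmod (rot_defect (hump_N j) n) * term_size n <= (1/2) ^ S n.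
Proof.
  intros Hp Hne. assert (HT : 0 <= term_size n).
  { pose proof (term_size_ge n). pose proof (pos_INR (S n)). lra. }
  pose proof (pow_le (1/2) (S n) ltac:(lra)).
  destruct (classic (exists i, n = hump_n i)) as [[i Hi]|Hoff].
  2:{ rewrite hump_seq_off; [rewrite Cmod_0; lra| |].
      - pose proof (hump_p_ge j). lia.
      - intros i Hi. apply Hoff. now exists i. }
  assert (Hji : (j < i)%nat).
  { destruct (Nat.lt_total j i) as [Hlt|[Heq|Hlt]]; [exact Hlt|congruence|].
    pose proof (hump_n_le_p i j Hlt). lia. }
  subst n. rewrite hump_seq_at, Cmod_1, Rmult_1_l.
  destruct (hump_spec i) as (_ & _ & Hq & _).
  pose proof (le_INR _ _ (hump_N_le j i Hji)) as HN.
  pose proof (rot_defect_le (hump_N j) (hump_n i)) as Hr.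
  pose proof (IZR_le _ _ (cf_q_ge_1 theta Hirr (S (k (hump_n i))))) as Hq1.
  pose proof (half_pow_mul_pow2 (S (hump_n i))) as Hhalf.
  pose proof (pow_lt 2 (S (hump_n i)) ltac:(lra)).
  pose proof PI_RGT_0. pose proof (pos_INR (hump_N j)).
  pose proof (Cmod_ge_0 (rot_defect (hump_N j) (hump_n i))).
  set (q := IZR (cf_q theta (S (k (hump_n i))))) in *.
  set (c := Cmod (rot_defect (hump_N j) (hump_n i))) in *.
  set (T := term_size (hump_n i)) in *. set (U := 2 ^ S (hump_n i)) in *.
  set (V := (1/2) ^ S (hump_n i)) in *.
  assert (Hcq : c * q <= 2 * PI * INR (hump_N j)).
  { apply Rmult_le_reg_r with (/ q); [apply Rinv_0_lt_compat; lra|].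
    rewrite Rmult_assoc, Rinv_r by lra. unfold Rdiv in Hr. lra. }
  assert (HcTU : c * (T * U) <= 1).
  { apply Rmult_le_reg_r with q; [lra|]. rewrite Rmult_1_l.
    apply Rle_trans with (2 * PI * INR (hump_N j) * (T * U)).
    - replace (c * (T * U) * q) with (c * q * (T * U)) by ring.
      apply Rmult_le_compat_r; [apply Rmult_le_pos; lra|exact Hcq].
    - eapply Rle_trans; [|exact Hq]. replace (2 * PI * INR (hump_Nmax i) * T * U)
        with (2 * PI * INR (hump_Nmax i) * (T * U)) by ring.
      apply Rmult_le_compat_r; [apply Rmult_le_pos; lra|]. apply Rmult_le_compat_l; lra. }
  rewrite <- (Rmult_1_r (c * T)), <- Hhalf.
  replace (c * T * (V * U)) with (c * (T * U) * V) by ring.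
  rewrite <- (Rmult_1_l V) at 2. apply Rmult_le_compat_r; lra.
Qed.

Lemma hump_other_term j n : n <> hump_n j ->
  Cmod (phi_coef (hump_N j) hump_seq n * (RtoC (INR (S (Qk n))) * z ^ Qk n))
  <= (2 ^ S (hump_p j) * term_size (hump_p j) + 1) * (1/2) ^ n.
Proof.
  intros Hne. rewrite Cmod_Dphi_term. set (p := hump_p j) in *.
  pose proof (term_size_ge p). pose proof (pos_INR (S p)).
  assert (HA : 0 <= 2 ^ S p * term_size p) by (apply Rmult_le_pos; [apply pow_le|]; lra).
  pose proof (pow_lt (1/2) n ltac:(lra)).
  apply Rle_trans with (2 ^ S p * term_size p * (1/2) ^ n + (1/2) ^ n); [|lra].
  destruct (le_lt_dec n p) as [Hle|Hlt].
  - pose proof (Cmod_ge_0 (hump_seq (Qk n))). pose proof (Cmod_ge_0 (rot_defect (hump_N j) n)).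
    pose proof (term_size_ge n). pose proof (pos_INR (S n)).
    assert (Hwc : Cmod (hump_seq (Qk n)) * Cmod (rot_defect (hump_N j) n) <= 2).
    { rewrite <- (Rmult_1_l 2). apply Rmult_le_compat; auto using hump_seq_le_1, rot_defect_le_2. }
    (* the early terms are bounded by [2 T_p <= 2^(p+1) T_p 2^-n] *)
    assert (Hpow : 2 <= 2 ^ S p * (1/2) ^ n).
    { change (2 ^ S p) with (2 * 2 ^ p). pose proof (half_pow_mul_pow2 n) as Hhalf.
      assert (2 ^ n <= 2 ^ p) by (apply Rle_pow; [lra|exact Hle]).
      rewrite Rmult_assoc. rewrite <- (Rmult_1_r 2) at 1. apply Rmult_le_compat_l; [lra|].
      apply Rle_trans with (2 ^ n * (1/2) ^ n); [rewrite Rmult_comm, Hhalf; lra|].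
      apply Rmult_le_compat_r; lra. }
    apply Rle_trans with (2 * term_size p); [|].
    + apply Rle_trans with (2 * term_size n).
      * apply Rmult_le_compat_r; lra.
      * apply Rmult_le_compat_l; [lra|apply term_size_le, Hle].
    + replace (2 ^ S p * term_size p * (1/2) ^ n) with (2 ^ S p * (1/2) ^ n * term_size p)
        by ring.
      pose proof (Rmult_le_compat_r (term_size p) _ _ ltac:(lra) Hpow). lra.
  - pose proof (hump_far_term j n Hlt Hne).
    change ((1/2) ^ S n) with (1/2 * (1/2) ^ n) in H2.
    pose proof (Rmult_le_pos _ _ HA (Rlt_le _ _ H1)). lra.
Qed.

Lemma Dphi_hump_gt j : INR j < Cmod (Dphi (hump_N j) hump_seq).
Proof.
  destruct (hump_spec j) as (_ & Hsize & _ & Hrot).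
  set (p := hump_p j) in *. set (n := hump_n j) in *.
  pose proof (Cmod_Csum_ge_term _ n _ (hump_other_term j)) as Hge.
  cbv beta in Hge. rewrite Cmod_Dphi_term in Hge. unfold n in Hge.
  rewrite hump_seq_at, Cmod_1, Rmult_1_l in Hge. fold n p in Hge.
  unfold Dphi. rewrite Cmod_mult, Cmod_Cexpi, Rmult_1_l.
  pose proof (le_INR _ _ (hump_p_ge j)). fold p in H. rewrite S_INR in H.
  assert (HT : 0 <= term_size n).
  { pose proof (term_size_ge n). pose proof (pos_INR (S n)). lra. }
  change (2 ^ S (S p)) with (2 * 2 ^ S p) in Hsize.
  set (A := 2 ^ S p * term_size p) in *.
  assert (term_size n <= Cmod (rot_defect (hump_N j) n) * term_size n).
  { rewrite <- (Rmult_1_l (term_size n)) at 1. apply Rmult_le_compat_r; lra. }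
  replace (2 * 2 ^ S p * term_size p) with (2 * A) in Hsize by (unfold A; ring).
  lra.
Qed.

Lemma hump_seq_D_unbounded : D_unbounded Dphi hump_seq.
Proof.
  split; [exists 1; exact hump_seq_le_1|]. intros M.
  exists (hump_N (Z.to_nat (up M))).
  pose proof (up_nat M). pose proof (Dphi_hump_gt (Z.to_nat (up M))). lra.
Qed.

End LacunaryPhi.

Theorem lemma2p6 (theta : R) (Hirr : irrational theta)
  (Hgrowth : cv_infty (fun n => ln (IZR (cf_q theta (S n))) / IZR (cf_q theta n)))
  (k : nat -> nat) (Hk : forall n, (k n < k (S n))%nat)
  (z : Cx) (Hz : 1 < Cmod z) :
  exists E : (nat -> Cx) -> Prop,
    linf_dense E /\ linf_Gdelta E /\
    forall u, E u ->
      forall M : R, exists (N : nat) (d : Cx),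
        has_cderiv (phi (INR N * theta) (fun n => cf_q theta (k n)) u) z d /\
        M < Cmod d.
Proof.
  set (D := Dphi theta k z).
  pose proof (Dphi_lincomb theta Hirr Hgrowth k Hk z Hz) as Hlin.
  pose proof (Dphi_bound theta Hirr Hgrowth k Hk z Hz) as Hbound.
  exists (D_unbounded D). split; [|split].
  - apply (D_unbounded_dense D Hlin).
    exists (hump_seq theta Hirr Hgrowth k Hk z Hz).
    exact (hump_seq_D_unbounded theta Hirr Hgrowth k Hk z Hz).
  - exact (D_unbounded_Gdelta D Hlin Hbound).
  - intros u [[B HB] Hu] M. destruct (Hu M) as [N HN].
    exists N, (D N u). split; [|exact HN].
    exact (has_cderiv_phi theta Hirr Hgrowth k Hk z Hz N u B HB).
Qed.
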